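(* Let $\mathcal{A}^*$ be a graded-commutative differential graded algebra over a field of characteristic zero, $\mathcal{N}^*$ a differential graded module over $\mathcal{A}^*$, $\xi\in\mathcal{A}^1$ a cocycle and $\alpha=[\xi]$. For every $r\geq2$ there is an isomorphism of graded vector spaces $\phi:MH^*_{(r)}\to\mathcal{F}^*_r$, where $\mathcal{F}^*_r$ is the $r$-th term of the deformation spectral sequence $\mathcal{F}^*_r(\mathcal{N}^*,\alpha)$, such that $\phi$ commutes with the differentials, i.e. $\phi\circ\Delta_r=d_r\circ\phi$.
   Context: A differential graded module $\mathcal{N}^*$ over $\mathcal{A}^*$ is a graded $\mathcal{A}^*$-module with a differential $d$ of degree $+1$ satisfying the Leibniz rule. Deformation spectral sequence: let $\mathcal{N}^*[[t]]$ be formal power series in $t$ with coefficients in $\mathcal{N}^*$, with differential $D_tx=dx+t\xi x$. The short exact sequence $0\to\mathcal{N}^*[[t]]\xrightarrow{t}\mathcal{N}^*[[t]]\xrightarrow{\pi}\mathcal{N}^*\to0$ ($\pi$: $t\mapsto 0$) gives an exact couple $(D,E,i,j,k)$ with $D=H^*(\mathcal{N}^*[[t]],D_t)$, $E=H^*(\mathcal{N}^* )$, $i=t$, $j=\pi_*$, $k$ the connecting homomorphism; $\mathcal{F}^*_r(\mathcal{N}^*,\alpha)$ is its spectral sequence (Massey derived couples: $E_1=E$, $E_{r+1}=\mathrm{Ker}(j_rk_r)/\mathrm{Im}(j_rk_r)$, $D_{r+1}=i(D_r)$, differential $d_r=j_rk_r$). Special Massey products: an $r$-chain starting from $a\in H^*(\mathcal{N}^*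 )$ is $\omega_1,\dots,\omega_r\in\mathcal{N}^*$ with $d\omega_1=0$, $[\omega_1]=a$, $d\omega_{s+1}=\xi\omega_s$ for $1\le s<r$. $MZ_{(r)}$ = classes from which an $r$-chain starts; $MB_{(1)}=0$ and for $r\ge2$, $MB_{(r)}$ = classes represented by $\xi\omega_{r-1}$ for some $(r-1)$-chain $(\omega_1,\dots,\omega_{r-1})$. $MH_{(r)}=MZ_{(r)}/MB_{(r)}$. $\Delta_r:MH_{(r)}\to MH_{(r)}$ (degree $1$) sends the class of $a\in MZ_{(r)}$ to the class of $\xi\omega_r$, for any $r$-chain $(\omega_1,\dots,\omega_r)$ starting from $a$ (well defined). *)

From HB Require Import structures.
From mathcomp Require Import all_boot all_order all_algebra.
Set Implicit Arguments. Unset Strict Implicit. Unset Printing Implicit Defensive.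
Import Order.TTheory GRing.Theory Num.Theory.
Local Open Scope ring_scope.

(* Graded objects are modelled as a total K-vector space V together with
   its homogeneous components G q (q : int), given as predicates; V is
   required to be the (internal) direct sum of the G q. *)

Section Graded.
Variable K : fieldType.

Definition subspace (V : lmodType K) (P : V -> Prop) : Prop :=
  P 0 /\ forall (c : K) x y, P x -> P y -> P (c *: x + y).

Definition graded_decomp (V : lmodType K) (G : int -> V -> Prop) : Prop :=
  [/\ forall q, subspace (G q),
      (forall x : V, exists (s : seq int) (f : int -> V),
          (forall i, G i (f i)) /\ x = \sum_(i <- s) f i) &
      (forall (s : seq int) (f : int -> V), uniq s -> (forall i, G i (f i)) ->
          \sum_(i <- s) f i = 0 -> forall i, i \in s -> f i = 0)].

Definition sgn (p : int) : K := (-1) ^+ absz p.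

Definition cgdga (A : algType K) (Ag : int -> A -> Prop) (dA : A -> A) : Prop :=
  (graded_decomp Ag
      /\ Ag 0 1
      /\ (forall p q a b, Ag p a -> Ag q b -> Ag (p + q) (a * b))
      /\ (forall (c : K) x y, dA (c *: x + y) = c *: dA x + dA y)
      /\ (forall p a, Ag p a -> Ag (p + 1) (dA a))
      /\ (forall a, dA (dA a) = 0)
      /\ (forall p a b, Ag p a -> dA (a * b) = dA a * b + sgn p *: (a * dA b))
      /\       (forall p q a b, Ag p a -> Ag q b -> a * b = sgn (p * q) *: (b * a))).

Definition dgmod (A : algType K) (Ag : int -> A -> Prop) (dA : A -> A)
    (N : lmodType K) (Ng : int -> N -> Prop) (act : A -> N -> N) (dN : N -> N)
    : Prop :=
  (graded_decomp Ng
      /\ (forall (c : K) a b x, act (c *: a + b) x = c *: act a x + act b x)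
      /\ (forall (c : K) a x y, act a (c *: x + y) = c *: act a x + act a y)
      /\ (forall x, act 1 x = x)
      /\ (forall a b x, act (a * b) x = act a (act b x))
      /\ (forall p q a x, Ag p a -> Ng q x -> Ng (p + q) (act a x))
      /\ (forall (c : K) x y, dN (c *: x + y) = c *: dN x + dN y)
      /\ (forall q x, Ng q x -> Ng (q + 1) (dN x))
      /\ (forall x, dN (dN x) = 0)
      /\       (forall p a x, Ag p a -> dN (act a x) = act (dA a) x + sgn p *: act a (dN x))).

(* An isomorphism between two subquotients Z1/B1 and Z2/B2 (B_i <= Z_i
   subspaces of V), given by a map f on representatives. *)
Definition sq_iso (V W : lmodType K) (Z1 B1 : V -> Prop) (Z2 B2 : W -> Prop)
    (f : V -> W) : Prop :=
  [/\ (forall z, Z1 z -> Z2 (f z)),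
      (forall z, B1 z -> B2 (f z)),
      (forall (c : K) z1 z2, Z1 z1 -> Z1 z2 ->
          B2 (f (c *: z1 + z2) - (c *: f z1 + f z2))),
      (forall z, Z1 z -> B2 (f z) -> B1 z) &
      (forall y, Z2 y -> exists z, Z1 z /\ B2 (f z - y))].

End Graded.

Section Deformation.
Variables (K : fieldType) (A : algType K) (N : lmodType K).
Variables (Ng : int -> N -> Prop) (act : A -> N -> N) (dN : N -> N) (xi : A).

Definition cocycle (q : int) (x : N) : Prop := Ng q x /\ dN x = 0.
Definition cobound (q : int) (x : N) : Prop :=
  exists y, Ng (q - 1) y /\ x = dN y.

(* formal power series N^q[[t]] : coefficient sequences *)
Definition sdeg (q : int) (s : nat -> N) : Prop := forall n, Ng q (s n).
Definition Dt (s : nat -> N) (n : nat) : N :=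
  dN (s n) + (if n is m.+1 then act xi (s m) else 0).
Definition tsh (s : nat -> N) (n : nat) : N := if n is m.+1 then s m else 0.
Definition scocycle (q : int) (s : nat -> N) : Prop :=
  sdeg q s /\ forall n, Dt s n = 0.
Definition scobound (q : int) (s : nat -> N) : Prop :=
  exists u, sdeg (q - 1) u /\ forall n, s n = Dt u n.

(* the exact couple: D = H(N[[t]], D_t), E = H(N), i = t, j = pi_*, and
   k the connecting homomorphism: k [e] = [y] where e = pi x, D_t x = t y. *)
Definition kconn (q : int) (e : N) (y : nat -> N) : Prop :=
  sdeg (q + 1) y /\
  exists x, [/\ sdeg q x, x 0%N = e & forall n, Dt x n = tsh y n].

(* the differential d_r = j_r k_r of the r-th derived couple, on
   representatives: d_r [e] = [j a] whenever k [e] = i^(r-1) [a]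
   (D_r = i^(r-1) D, j_r (i^(r-1) a) = [j a], k_r [e] = k e). *)
Definition dr (r : nat) (q : int) (e w : N) : Prop :=
  exists y a, [/\ kconn q e y, scocycle (q + 1) a,
     scobound (q + 1) (fun n => y n - iter r.-1 tsh a n) & w = a 0%N].

(* E_(n+1) = Z/B as a subquotient of the cochains: returns (Z, B) *)
Fixpoint EZB (n : nat) : (int -> N -> Prop) * (int -> N -> Prop) :=
  match n with
  | 0 => (cocycle, cobound)
  | n'.+1 =>
    let ZB := EZB n' in
    (fun q x => ZB.1 q x /\ exists w, dr n q x w /\ ZB.2 (q + 1) w,
     fun q x => cocycle q x /\
       exists e w, [/\ ZB.1 (q - 1) e, dr n (q - 1) e w & ZB.2 q (x - w)])
  end.

(* F_r^q = FZ r q / FB r q  (r >= 1) *)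
Definition FZ (r : nat) := (EZB r.-1).1.
Definition FB (r : nat) := (EZB r.-1).2.

Definition chain (r : nat) (q : int) (om : nat -> N) : Prop :=
  [/\ forall s, (1 <= s <= r)%N -> Ng q (om s),
      dN (om 1%N) = 0 &
      forall s, (1 <= s < r)%N -> dN (om s.+1) = act xi (om s)].

Definition chain_from (r : nat) (q : int) (a : N) (om : nat -> N) : Prop :=
  chain r q om /\ cobound q (om 1%N - a).

Definition MZ (r : nat) (q : int) (a : N) : Prop :=
  cocycle q a /\ exists om, chain_from r q a om.

Definition MB (r : nat) (q : int) (a : N) : Prop :=
  cocycle q a /\
  if (r <= 1)%N then cobound q a
  else exists om, chain r.-1 (q - 1) om /\ cobound q (a - act xi (om r.-1)).

Definition Delta (r : nat) (q : int) (a w : N) : Prop :=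
  exists om, chain_from r q a om /\ w = act xi (om r).

End Deformation.

From Pilot Require Import Defs.
From HB Require Import structures.
From mathcomp Require Import all_boot all_order all_algebra zify.
Set Implicit Arguments. Unset Strict Implicit. Unset Printing Implicit Defensive.
Import Order.TTheory GRing.Theory Num.Theory.
Local Open Scope ring_scope.

(* r-chains starting from a are the cochains x of N[[t]] with [x(0)] = a and
   D_t x = 0 mod t^r: the chain (w_1, ..., w_r) corresponds to
   x = sum_(k < r) (-1)^k w_(k+1) t^k, for which D_t x = (-1)^(r-1) (xi w_r) t^r.
   Feeding such series to the connecting map k and to i^(r-1) computes d_r on
   representatives: d_r [a] = (-1)^(r-1) [xi w_r], and every other value of
   d_r [a] differs from it by a Massey boundary.  By induction on r the r-th
   page of the deformation spectral sequence is therefore the subquotient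
   MZ_(r) / MB_(r) itself, and multiplying degree q by ((-1)^(r-1))^q turns
   d_r into Delta_r. *)

Section MasseyDeformation.
Variables (K : fieldType) (A : algType K) (N : lmodType K).
Variables (Ng : int -> N -> Prop) (act : A -> N -> N) (dN : N -> N) (xi : A).
Hypothesis Ng_subspace : forall q, subspace (Ng q).
Hypothesis dN_linear : forall (c : K) x y, dN (c *: x + y) = c *: dN x + dN y.
Hypothesis xi_linear :
  forall (c : K) x y, act xi (c *: x + y) = c *: act xi x + act xi y.
Hypothesis dN_deg : forall q x, Ng q x -> Ng (q + 1) (dN x).
Hypothesis xi_deg : forall q x, Ng q x -> Ng (q + 1) (act xi x).
Hypothesis dN_dN : forall x, dN (dN x) = 0.
Hypothesis dN_xi : forall x, dN (act xi x) = - act xi (dN x).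
Hypothesis xi_xi : forall x, act xi (act xi x) = 0.

HB.instance Definition _ := GRing.isLinear.Build K N N *:%R dN dN_linear.
HB.instance Definition _ := GRing.isLinear.Build K N N *:%R (act xi) xi_linear.

Notation Dt := (Dt act dN xi).
Notation cocycle := (cocycle Ng dN).
Notation cobound := (cobound Ng dN).
Notation chain := (chain Ng act dN xi).
Notation MZ := (MZ Ng act dN xi).
Notation MB := (MB Ng act dN xi).
Notation dr := (dr Ng act dN xi).

Lemma Ng0 q : Ng q 0. Proof. by case: (Ng_subspace q). Qed.

Lemma Ng_lin q (c : K) x y : Ng q x -> Ng q y -> Ng q (c *: x + y).
Proof. by case: (Ng_subspace q) => _; apply. Qed.

Lemma NgZ q c x : Ng q x -> Ng q (c *: x).
Proof. by move=> hx; rewrite -[_ *: x]addr0; apply: Ng_lin (Ng0 q). Qed.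

Lemma NgD q x y : Ng q x -> Ng q y -> Ng q (x + y).
Proof. by move=> hx hy; have := Ng_lin 1 hx hy; rewrite scale1r. Qed.

Lemma NgB q x y : Ng q x -> Ng q y -> Ng q (x - y).
Proof. by move=> hx hy; rewrite addrC -scaleN1r; apply: Ng_lin hy hx. Qed.

Lemma DtD f g k : Dt (fun j => f j + g j) k = Dt f k + Dt g k.
Proof.
rewrite /Defs.Dt linearD /=; case: k => [|k]; first by rewrite !addr0.
by rewrite linearD /= addrACA.
Qed.

Lemma DtB f g k : Dt (fun j => f j - g j) k = Dt f k - Dt g k.
Proof.
rewrite /Defs.Dt linearB /=; case: k => [|k]; first by rewrite !addr0.
by rewrite linearB /= addrACA opprD.
Qed.

Lemma Dt_Dt f k : Dt (Dt f) k = 0.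
Proof.
rewrite /Defs.Dt; case: k => [|k]; first by rewrite !addr0 dN_dN.
rewrite linearD /= dN_dN dN_xi add0r; case: k => [|k]; first by rewrite addr0 addNr.
by rewrite linearD /= xi_xi addr0 addNr.
Qed.

Lemma Dt_tsh f k : Dt (tsh f) k = tsh (Dt f) k.
Proof. by rewrite /Defs.Dt /tsh; case: k => [|[|k]]; rewrite ?linear0 ?addr0. Qed.

Lemma Dt_deg q f k : (forall j, Ng q (f j)) -> Ng (q + 1) (Dt f k).
Proof.
move=> hf; apply: NgD; first exact: dN_deg.
by case: k => [|k]; [apply: Ng0 | apply: xi_deg].
Qed.

Lemma iter_tsh m (f : nat -> N) k :
  iter m (@tsh K N) f k = if (m <= k)%N then f (k - m)%N else 0.
Proof.
elim: m k => [|m IH] k /=; first by rewrite subn0.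
by rewrite /tsh; case: k => [|k] //; rewrite IH ltnS subSS.
Qed.

Lemma cobound0 q : cobound q 0.
Proof. by exists 0; rewrite linear0; split; first exact: Ng0. Qed.

Lemma cobound_lin q (c : K) u w :
  cobound q u -> cobound q w -> cobound q (c *: u + w).
Proof.
move=> [u' [hu ->]] [w' [hw ->]]; exists (c *: u' + w').
by split; [apply: Ng_lin | rewrite dN_linear].
Qed.

Lemma cobound_scale q (c : K) u : cobound q u -> cobound q (c *: u).
Proof. by move=> hu; have := cobound_lin c hu (cobound0 q); rewrite addr0. Qed.

Lemma chain_deg n q om s : chain n q om -> (1 <= s <= n)%N -> Ng q (om s).
Proof. by case=> hdeg _ _; apply: hdeg. Qed.

Lemma chain0 n q : chain n q (fun _ => 0).
Proof. by split=> [s _|//|s _]; rewrite ?linear0 //; apply: Ng0. Qed.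

Lemma chain_lin n q (c : K) om1 om2 : chain n q om1 -> chain n q om2 ->
  chain n q (fun s => c *: om1 s + om2 s).
Proof.
move=> [g1 d1 s1] [g2 d2 s2]; split.
- by move=> s hs; apply: Ng_lin; [apply: g1 | apply: g2].
- by rewrite dN_linear d1 d2 scaler0 addr0.
- by move=> s hs; rewrite dN_linear xi_linear s1 // s2.
Qed.

Lemma chain_scale n q (c : K) om : chain n q om -> chain n q (fun s => c *: om s).
Proof.
move=> [g d dS]; split.
- by move=> s hs; apply: NgZ; apply: g.
- by rewrite linearZ /= d scaler0.
- by move=> s hs; rewrite !linearZ /= dS.
Qed.

Lemma chain_trunc n q om : chain n.+1 q om -> chain n q om.
Proof. by case=> g d dS; split=> // s hs; [apply: g | apply: dS]; lia. Qed.

Lemma chain_snoc n q om h : (0 < n)%N -> chain n q om -> Ng q h ->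
  dN h = act xi (om n) -> chain n.+1 q (fun s => if s == n.+1 then h else om s).
Proof.
move=> hn [g d dS] hh dh; split.
- by move=> s hs; case: eqP => // /eqP hsn; apply: g; lia.
- by rewrite ifF //; apply/negbTE; lia.
- move=> s hs; rewrite eqSS (_ : s == n.+1 = false); last by apply/negbTE; lia.
  by case: eqP => [->|/eqP hsn] //; apply: dS; lia.
Qed.

Lemma cobound_MB n q u : cobound q u -> MB n q u.
Proof.
move=> [y [hy ->]]; split; first by split; [rewrite -[q](subrK 1); apply: dN_deg|].
case: ifP => _; first by exists y.
by exists (fun _ => 0); split; [apply: chain0 | rewrite linear0 subr0; exists y].
Qed.

Lemma MB_lin n q (c : K) u w : MB n q u -> MB n q w -> MB n q (c *: u + w).
Proof.
move=> [[hu du] bu] [[hw dw] bw]; split.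
  by split; [apply: Ng_lin | rewrite dN_linear du dw scaler0 addr0].
move: bu bw; case: ifP => _; first exact: cobound_lin.
move=> [om1 [c1 b1]] [om2 [c2 b2]]; exists (fun s => c *: om1 s + om2 s).
split; first exact: chain_lin.
by have := cobound_lin c b1 b2; rewrite xi_linear scalerBr opprD addrACA.
Qed.

Lemma MB_scale n q (c : K) u : MB n q u -> MB n q (c *: u).
Proof. by move=> hu; have := MB_lin c hu (cobound_MB n (cobound0 q)); rewrite addr0. Qed.

Lemma MB_sub n q u w : MB n q u -> MB n q w -> MB n q (u - w).
Proof. by move=> hu hw; have := MB_lin (-1) hw hu; rewrite scaleN1r addrC. Qed.

Lemma MZ_scale n q (c : K) u : MZ n q u -> MZ n q (c *: u).
Proof.
move=> [[hu du] [om [hc hcb]]]; split.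
  by split; [apply: NgZ | rewrite linearZ /= du scaler0].
exists (fun s => c *: om s); split; first exact: chain_scale.
by rewrite -scalerBr; apply: cobound_scale.
Qed.

Definition tconst (w : N) (k : nat) : N := if k is 0 then w else 0.

Definition chain_series n (om : nat -> N) (k : nat) : N :=
  if (k < n)%N then (-1) ^+ k *: om k.+1 else 0.

Lemma chain_series_deg n q om k : chain n q om -> Ng q (chain_series n om k).
Proof.
move=> hc; rewrite /chain_series; case: ifP => hk; last exact: Ng0.
by apply: NgZ; apply: (chain_deg hc); lia.
Qed.

Lemma Dt_chain_series n q om k : (0 < n)%N -> chain n q om ->
  Dt (chain_series n om) k = if k == n then (-1) ^+ n.-1 *: act xi (om n) else 0.
Proof.
move=> hn [_ d1 dS]; rewrite /Defs.Dt /chain_series; case: k => [|k].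
  by rewrite hn expr0 scale1r d1 addr0 eq_sym gtn_eqF.
case: (ltngtP k.+1 n) => hk.
- rewrite linearZ /= dS; last by lia.
  by rewrite linearZ /= exprS mulN1r scaleNr addNr.
- by rewrite !linear0 addr0.
- by rewrite -hk linear0 add0r linearZ.
Qed.

Lemma chain_of_series m q Z : (0 < m)%N -> (forall k, Ng q (Z k)) ->
  (forall k, (k < m)%N -> Dt Z k = 0) ->
  chain m q (fun s => (-1) ^+ (m - s) *: Z s.-1).
Proof.
move=> hm hZ hDt; split.
- by move=> s _; apply: NgZ.
- by have := hDt 0%N hm; rewrite /Defs.Dt addr0 linearZ /= => ->; rewrite scaler0.
- move=> [//|s] hs /=.
  have /eqP := hDt s.+1 (proj2 (andP hs)).
  rewrite /Defs.Dt addr_eq0 linearZ /= => /eqP ->.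
  rewrite linearZ /= (_ : (m - s.+1)%N = (m - s.+2).+1); last by lia.
  by rewrite exprS mulN1r scaleNr scalerN.
Qed.

Lemma MB_Dt_series m q Z : (forall k, Ng q (Z k)) ->
  (forall k, (k < m)%N -> Dt Z k = 0) -> MB m.+1 (q + 1) (Dt Z m).
Proof.
move=> hZ hDt; split.
  split; first exact: Dt_deg.
  have := Dt_Dt Z m; rewrite {1}/Defs.Dt.
  by case: m hDt => [|m] hDt; rewrite ?addr0 // (hDt m) // linear0 addr0.
case: m hDt => [|m] hDt /=; first by exists (Z 0%N); rewrite addrK /Defs.Dt addr0.
exists (fun s => (-1) ^+ (m.+1 - s) *: Z s.-1); rewrite addrK; split.
  exact: chain_of_series.
by exists (Z m.+1); rewrite addrK subnn expr0 scale1r /Defs.Dt addrK.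
Qed.

Lemma Dt_tdiv Y k : Y 0%N = 0 -> Dt (fun j => Y j.+1) k = Dt Y k.+1.
Proof. by move=> Y0; rewrite /Defs.Dt; case: k => [|k] //=; rewrite Y0 linear0. Qed.

Lemma xi_dN_chain n q om : (0 < n)%N -> chain n q om -> act xi (dN (om n)) = 0.
Proof.
case: n => [//|[|n]] _ [_ d1 dS]; first by rewrite d1 linear0.
by rewrite dS ?xi_xi ?ltnSn.
Qed.

Lemma dr_chain n q e om : (0 < n)%N -> chain n q om -> cobound q (om 1%N - e) ->
  dr n q e ((-1) ^+ n.-1 *: act xi (om n)).
Proof.
move=> hn hc [b [hb he]].
set W := _ *: _.
have hW : Ng (q + 1) W by apply/NgZ/xi_deg/(chain_deg hc); lia.
have dW : dN W = 0 by rewrite linearZ /= dN_xi (xi_dN_chain hn hc) oppr0 scaler0.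
have xiW : act xi W = 0 by rewrite linearZ /= xi_xi scaler0.
have hb' : forall k, Ng (q - 1) (tconst b k) by case=> [|k] //; apply: Ng0.
have hWk : forall k, Ng (q + 1) (tconst W k) by case=> [|k] //; apply: Ng0.
exists (iter n.-1 (@tsh K N) (tconst W)), (tconst W); split=> //.
- split=> [k|]; first by rewrite iter_tsh; case: ifP => _ //; apply: Ng0.
  exists (fun k => chain_series n om k - Dt (tconst b) k); split.
  + move=> k; apply: NgB; first exact: chain_series_deg.
    by rewrite -[q](subrK 1); apply: Dt_deg.
  + by rewrite /chain_series hn expr0 scale1r /Defs.Dt addr0 -he opprB addrC subrK.
  + move=> k; rewrite DtB Dt_Dt subr0 (Dt_chain_series _ hn hc).
    rewrite [tsh _ k](_ : _ = iter n.-1.+1 (@tsh K N) (tconst W) k) // prednK //.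
    by rewrite iter_tsh; case: ltngtP => // [hk|<-]; rewrite ?subnn // -(subnSK hk).
- split=> // [[|[|k]]]; rewrite /Defs.Dt /= ?linear0 ?addr0 //.
  by rewrite add0r.
- exists (fun=> 0); split=> [k|[|k]]; first exact: Ng0.
  all: by rewrite subrr /Defs.Dt !linear0 addr0.
Qed.

Lemma MB_dr_chain n q e om v : (0 < n)%N -> chain n q om ->
  cobound q (om 1%N - e) -> dr n q e v ->
  MB n (q + 1) ((-1) ^+ n.-1 *: act xi (om n) - v).
Proof.
move=> hn hc [b [hb he]] [y [a [[_ [x [hx hx0 hDx]]] _ [u [hu hDu]] ->]]].
set W := _ *: _.
(* [Y] has zero constant term and [D_t Y = t^n (W - a)], so [Y / t] exhibits
   [W - a 0] as a Massey boundary. *)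
pose Y k := chain_series n om k - x k + tsh u k - Dt (tconst b) k.
have hY k : Ng q (Y k).
  apply: NgB; last by rewrite -[q](subrK 1); apply: Dt_deg; case=> [|j] //; apply: Ng0.
  apply: NgD; first by apply: NgB; [apply: chain_series_deg | apply: hx].
  by case: k => [|k] /=; [apply: Ng0 | rewrite -[q](addrK 1); apply: hu].
have Y0 : Y 0%N = 0.
  by rewrite /Y /chain_series hn expr0 scale1r hx0 /Defs.Dt /= !addr0 he subrr.
have DY k : Dt Y k = (if k == n then W else 0) - iter n (@tsh K N) a k.
  rewrite /Y DtB DtD DtB Dt_Dt subr0 Dt_tsh (Dt_chain_series _ hn hc) hDx -addrA.
  congr (_ + _); rewrite -(prednK hn).
  case: k => [|k] /=; first by rewrite addr0.
  by rewrite -[Dt u k]hDu addKr.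
have DYS k : (k < n.-1)%N -> Dt Y k.+1 = 0.
  by move=> hk; rewrite DY iter_tsh !ifF ?subr0 //; apply/negbTE; lia.
have -> : W - a 0%N = Dt (fun j => Y j.+1) n.-1.
  by rewrite Dt_tdiv // prednK // DY eqxx iter_tsh leqnn subnn.
rewrite -{1}(prednK hn); apply: MB_Dt_series => // k hk.
by rewrite Dt_tdiv // DYS.
Qed.

(* Adding to [om] an (n-1)-chain shifted up by one place gives a chain that
   still starts from [om 1]. *)
Lemma chain_correct n q om v : (0 < n)%N -> chain n q om ->
  MB n (q + 1) (v - act xi (om n)) ->
  exists mu, [/\ chain n q mu, mu 1%N = om 1%N & cobound (q + 1) (v - act xi (mu n))].
Proof.
move=> hn hc [_]; case: ifP => [_ hcb|hn1 [eta [heta hcb]]]; first by exists om.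
rewrite addrK in heta.
exists (fun s => om s + (if (2 <= s)%N then eta s.-1 else 0)); split.
- case: hc heta => g d dS [g' d' dS']; split.
  + move=> s hs; apply: NgD; first exact: g.
    by case: ifP => h2; [apply: g'; lia | apply: Ng0].
  + by rewrite addr0.
  + move=> s hs; rewrite !linearD /= dS // (_ : (2 <= s.+1)%N); last by lia.
    congr (_ + _); case: s hs => [//|[|s]] hs /=; first by rewrite d' linear0.
    by rewrite dS' //; lia.
- by rewrite addr0.
- by rewrite (_ : (2 <= n)%N) 1?linearD /= ?opprD ?addrA //; lia.
Qed.

Lemma chain_extend n q om : (0 < n)%N -> chain n q om ->
  MB n (q + 1) (act xi (om n)) -> exists mu, chain n.+1 q mu /\ mu 1%N = om 1%N.
Proof.
move=> hn hc hb.
have hb' : MB n (q + 1) (0 - act xi (om n)) by rewrite sub0r -scaleN1r; apply: MB_scale.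
have [mu [hmu <- [h [hh dh]]]] := chain_correct hn hc hb'.
exists (fun s => if s == n.+1 then - h else mu s); split.
  apply: chain_snoc => //.
    by rewrite -sub0r; apply: NgB (Ng0 _) _; rewrite -(addrK 1 q).
  by rewrite linearN /= -dh sub0r opprK.
by rewrite ifF //; apply/negbTE; lia.
Qed.

Lemma MZ_step n q e :
  MZ n.+2 q e <-> MZ n.+1 q e /\ exists w, dr n.+1 q e w /\ MB n.+1 (q + 1) w.
Proof.
split.
- move=> [he [om [hc hcb]]].
  split; first by split=> //; exists om; split=> //; apply: chain_trunc.
  exists ((-1) ^+ n *: act xi (om n.+1)).
  split; first exact: (dr_chain (ltn0Sn n) (chain_trunc hc) hcb).
  apply: cobound_MB; exists ((-1) ^+ n *: om n.+2); rewrite addrK; split.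
    by apply/NgZ/(chain_deg hc); lia.
  by case: hc => _ _ dS; rewrite linearZ /= dS // ltnSn.
- move=> [[he [om [hc hcb]]] [w [hdr hb]]]; split=> //.
  have hxi : MB n.+1 (q + 1) (act xi (om n.+1)).
    have := MB_scale ((-1) ^+ n) (MB_lin 1 (MB_dr_chain (ltn0Sn n) hc hcb hdr) hb).
    by rewrite scale1r subrK signrZK.
  have [mu [hmu hmu1]] := chain_extend (ltn0Sn n) hc hxi.
  by exists mu; split=> //; rewrite hmu1.
Qed.

Lemma MB_step n q x : MB n.+2 q x <-> cocycle q x /\
  exists e w, [/\ MZ n.+1 (q - 1) e, dr n.+1 (q - 1) e w & MB n.+1 q (x - w)].
Proof.
split.
- move=> [hx /= [om [hc hcb]]]; split=> //.
  pose om' s := (-1) ^+ n *: om s.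
  have hc' : chain n.+1 (q - 1) om' by apply: chain_scale.
  have hcb' : cobound (q - 1) (om' 1%N - om' 1%N) by rewrite subrr; apply: cobound0.
  exists (om' 1%N), (act xi (om n.+1)); split.
  + split; last by exists om'.
    by case: hc' => g d _; split=> //; apply: g.
  + by have := dr_chain (ltn0Sn n) hc' hcb'; rewrite /= linearZ /= signrZK.
  + exact: cobound_MB.
- move=> [hx [e [w [[_ [om [hc hcb]]] hdr hb]]]]; split=> //=.
  have := MB_dr_chain (ltn0Sn n) hc hcb hdr; rewrite subrK => /(MB_sub hb).
  rewrite opprB addrA subrK.
  rewrite -linearZ -[q in MB _ q](subrK 1).
  move=> /(chain_correct (ltn0Sn n) (chain_scale _ hc)).
  by case=> // mu [hmu _]; rewrite subrK; exists mu.
Qed.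

Notation EZB := (EZB Ng act dN xi).

Lemma EZB_char n q e :
  ((EZB n).1 q e <-> MZ n.+1 q e) /\ ((EZB n).2 q e <-> MB n.+1 q e).
Proof.
elim: n q e => [|n IH] q e /=.
  split; split=> [he|[]] //; last exact: cobound_MB.
  split=> //; exists (fun=> e); split; last by rewrite subrr; apply: cobound0.
  by case: he => he de; split=> // s; lia.
have IHZ q' e' := (IH q' e').1; have IHB q' e' := (IH q' e').2.
rewrite MZ_step MB_step; split; split.
- by case=> /IHZ hz [w [hdr /IHB hb]]; split=> //; exists w.
- by case=> /IHZ hz [w [hdr /IHB hb]]; split=> //; exists w.
- by case=> hx [e' [w [/IHZ hz hdr /IHB hb]]]; split=> //; exists e', w.
- by case=> hx [e' [w [/IHZ hz hdr /IHB hb]]]; split=> //; exists e', w.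
Qed.

Lemma FZ_MZ r q e : (0 < r)%N -> FZ Ng act dN xi r q e <-> MZ r q e.
Proof. by move=> hr; have := (EZB_char r.-1 q e).1; rewrite prednK. Qed.

Lemma FB_MB r q e : (0 < r)%N -> FB Ng act dN xi r q e <-> MB r q e.
Proof. by move=> hr; have := (EZB_char r.-1 q e).2; rewrite prednK. Qed.

Lemma Massey_deformation_iso r : (2 <= r)%N ->
  exists phi : int -> N -> N,
    forall q : int,
      sq_iso (MZ r q) (MB r q) (FZ Ng act dN xi r q) (FB Ng act dN xi r q) (phi q) /\
      (forall z w y, MZ r q z -> Delta Ng act dN xi r q z w -> dr r q (phi q z) y ->
         FB Ng act dN xi r (q + 1) (phi (q + 1) w - y)).
Proof.
move=> hr; have hr0 : (0 < r)%N by lia.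
have EZ q e := FZ_MZ q e hr0; have EB q e := FB_MB q e hr0.
pose s : K := (-1) ^+ r.-1.
have s_neq0 : s != 0 by rewrite signr_eq0.
have sqK q z : s ^ q *: (s ^ q *: z) = z.
  by rewrite scalerA -expfzMl -expr2 sqrr_sign exp1rz scale1r.
exists (fun q z => s ^ q *: z) => q; split.
  split.
  - by move=> z /MZ_scale hz; apply/EZ.
  - by move=> z /MB_scale hz; apply/EB.
  - move=> c z1 z2 _ _; apply/EB.
    by rewrite scalerDr !scalerA mulrC subrr; apply/cobound_MB/cobound0.
  - by move=> z _ /EB /(MB_scale (s ^ q)); rewrite sqK.
  - move=> y /EZ /(MZ_scale (s ^ q)) hy; exists (s ^ q *: y); split=> //.
    by apply/EB; rewrite sqK subrr; apply/cobound_MB/cobound0.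
move=> z w y _ [om [[hc hcb] ->]] hdr; apply/EB.
have hcb' : cobound q (s ^ q *: om 1%N - s ^ q *: z).
  by rewrite -scalerBr; apply: cobound_scale.
have := MB_dr_chain hr0 (chain_scale (s ^ q) hc) hcb' hdr.
by rewrite linearZ scalerA expfzDr // expr1z mulrC.
Qed.

End MasseyDeformation.

Lemma cgdga_sqr_odd (K : fieldType) (A : algType K) (Ag : int -> A -> Prop)
    (dA : A -> A) p a :
  (2%:R : K) != 0 -> cgdga Ag dA -> Ag p a -> odd (absz p) -> a * a = 0.
Proof.
move=> two_neq0 [_ [_ [_ [_ [_ [_ [_ hcomm]]]]]]] ha hp.
have : a * a = - (a * a).
  by rewrite {1}(hcomm _ _ _ _ ha ha) /sgn abszM -signr_odd oddM hp scaleN1r.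
move/eqP; rewrite -subr_eq0 opprK -mulr2n -scaler_nat scaler_eq0.
by rewrite (negbTE two_neq0) => /eqP.
Qed.

Theorem theorem3p6 (K : fieldType) (A : algType K) (N : lmodType K)
    (Ag : int -> A -> Prop) (dA : A -> A)
    (Ng : int -> N -> Prop) (act : A -> N -> N) (dN : N -> N) (xi : A) :
  [pchar K] =i pred0 ->
  cgdga Ag dA ->
  dgmod Ag dA Ng act dN ->
  Ag 1 xi -> dA xi = 0 ->
  forall r : nat, (2 <= r)%N ->
  exists phi : int -> N -> N,
    forall q : int,
      sq_iso (MZ Ng act dN xi r q) (MB Ng act dN xi r q)
             (FZ Ng act dN xi r q) (FB Ng act dN xi r q) (phi q) /\
      (forall z w y, MZ Ng act dN xi r q z ->
         Delta Ng act dN xi r q z w ->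
         dr Ng act dN xi r q (phi q z) y ->
         FB Ng act dN xi r (q + 1) (phi (q + 1) w - y)).
Proof.
move=> char0 hA hM hxi dxi r hr.
have two_neq0 : (2%:R : K) != 0 by have := char0 2; rewrite !inE /= => ->.
have xi2 : xi * xi = 0 by apply: cgdga_sqr_odd two_neq0 hA hxi _.
case: hM => [[hsub _ _] [hactl [hactr [_ [hactM [hactg [hdL [hdg [hdd hLeib]]]]]]]]].
have act0 x : act 0 x = 0.
  by have := hactl (-1) 0 0 x; rewrite scaler0 addr0 scaleN1r addNr.
apply: (Massey_deformation_iso hsub hdL (fun c => hactr c xi) hdg _ hdd _ _ hr).
- by move=> q x hx; rewrite addrC; apply: hactg hxi hx.
- by move=> x; rewrite (hLeib _ _ _ hxi) dxi act0 add0r scaleN1r.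
- by move=> x; rewrite -hactM xi2 act0.
Qed.
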